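(* Let $n\ge1$, $\mathcal{X}$ the simplex in $\mathbb{R}^{n+1}$, $\theta$ a kernel, $\Phi$ a Lipschitz continuous smooth function on an open neighborhood of $\mathcal{X}$, and $\eta>0$. Let $x(t)$ be an interior solution of the inertial dynamics (ID) defined for all $t\ge0$. Then the rate of change $\dot K(t)$ of the kinetic energy $K(t)=\frac12\|\dot x(t)\|^2$ is bounded from above for all $t\ge0$.
   Context: $\mathcal{X}=\{x\in\mathbb{R}^{n+1}:x_\alpha\ge0,\sum_\alpha x_\alpha=1\}$ with relative interior $\mathcal{X}^\circ$. A kernel is a $C^\infty$ function $\theta:[0,\infty)\to\mathbb{R}\cup\{+\infty\}$ with $\theta(x)<\infty$ for $x>0$, $\lim_{x\to0^+}\theta'(x)=-\infty$, $\theta''>0$, $\theta'''<0$ on $(0,\infty)$. The norm is $\|\dot x\|^2=\sum_\alpha\theta''(x_\alpha)\dot x_\alpha^2$. With $\theta''_\alpha=\theta''(x_\alpha)$, $\theta'''_\alpha=\theta'''(x_\alpha)$, $\Theta''=(\sum_\beta1/\theta''_\beta)^{-1}$, $v_\alpha=\partial\Phi/\partial x_\alpha$, the inertial dynamics (ID) on $\mathcal{X}^\circ$ are $$\ddot x_\alpha=\frac{1}{\theta''_\alpha}\Big[v_\alpha-\sum_{\beta}\frac{\Theta''}{\theta''_\beta}v_\beta\Big]-\frac{1}{2\theta''_\alpha}\Big[\theta'''_\alpha\dot x_\alpha^2-\sum_\beta\frac{\Theta''}{\theta''_\beta}\theta'''_\beta\dot x_\beta^2\Big]-\eta\dot x_\alpha.$$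 *)

From HB Require Import structures.
From mathcomp Require Import all_boot all_order all_algebra.
From mathcomp Require Import all_classical all_reals all_analysis.
Set Implicit Arguments. Unset Strict Implicit. Unset Printing Implicit Defensive.
Import Order.TTheory GRing.Theory Num.Theory.
Import numFieldNormedType.Exports.
Local Open Scope classical_set_scope.
Local Open Scope ring_scope.

Section Defs.
Variable R : realType.

(* A kernel theta : [0,oo) -> R u {+oo}.  Only its restriction to (0,oo),
   where it is finite, matters; we model it as a function R -> R whose
   values at x <= 0 are irrelevant. *)
Definition is_kernel (theta : R -> R) : Prop :=
  (forall (k : nat) (x : R), 0 < x -> derivable ((derive1n k theta)) x 1) /\
  ((derive1 theta) x @[x --> 0^'+] --> -oo) /\
  (forall x : R, 0 < x -> 0 < (derive1n 2 theta) x) /\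
  (forall x : R, 0 < x -> (derive1n 3 theta) x < 0).

Definition simplex (m : nat) : set 'rV[R]_m :=
  [set p | (forall a : 'I_m, 0 <= p ord0 a) /\ \sum_(a < m) p ord0 a = 1].
Definition simplex_int (m : nat) : set 'rV[R]_m :=
  [set p | (forall a : 'I_m, 0 < p ord0 a) /\ \sum_(a < m) p ord0 a = 1].

Definition evec (m : nat) (a : 'I_m) : 'rV[R]_m := delta_mx ord0 a.

Fixpoint iter_partial (m : nat) (l : seq 'I_m) (f : 'rV[R]_m -> R)
  : 'rV[R]_m -> R :=
  match l with
  | [::] => f
  | i :: l' => fun p => 'D_(evec i) (iter_partial l' f) p
  end.

Definition smooth_on (m : nat) (U : set 'rV[R]_m) (f : 'rV[R]_m -> R) : Prop :=
  forall (l : seq 'I_m) (p : 'rV[R]_m), U p ->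
    {for p, continuous (iter_partial l f)} /\
    forall i : 'I_m, derivable (iter_partial l f) p (evec i).

Definition pgrad (m : nat) (Phi : 'rV[R]_m -> R) (p : 'rV[R]_m) (a : 'I_m) : R :=
  'D_(evec a) Phi p.

Definition coord (m : nat) (x : R -> 'rV[R]_m) (a : 'I_m) : R -> R :=
  fun t => x t ord0 a.
Definition vel (m : nat) (x : R -> 'rV[R]_m) (a : 'I_m) : R -> R :=
  derive1 (coord x a).
Definition acc (m : nat) (x : R -> 'rV[R]_m) (a : 'I_m) : R -> R :=
  derive1n 2 (coord x a).

Definition ID_rhs (m : nat) (theta : R -> R) (Phi : 'rV[R]_m -> R) (eta : R)
  (x : R -> 'rV[R]_m) (t : R) (a : 'I_m) : R :=
  let th2 := fun b => (derive1n 2 theta) (coord x b t) in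
  let th3 := fun b => (derive1n 3 theta) (coord x b t) in
  let Th2 := (\sum_(b < m) (th2 b)^-1)^-1 in
  let v := pgrad Phi (x t) in
  (th2 a)^-1 * (v a - \sum_(b < m) Th2 / th2 b * v b)
  - (2 * th2 a)^-1 * (th3 a * (vel x a t) ^+ 2
                      - \sum_(b < m) Th2 / th2 b * th3 b * (vel x b t) ^+ 2)
  - eta * vel x a t.

Definition ID_interior_solution (m : nat) (theta : R -> R) (Phi : 'rV[R]_m -> R)
  (eta : R) (x : R -> 'rV[R]_m) : Prop :=
  forall t : R, 0 <= t ->
    @simplex_int m (x t) /\
    (forall a : 'I_m, derivable (coord x a) t 1 /\ derivable (vel x a) t 1) /\
    (forall a : 'I_m, acc x a t = ID_rhs theta Phi eta x t a).

Definition kinetic (m : nat) (theta : R -> R) (x : R -> 'rV[R]_m) : R -> R :=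
  fun t => 2^-1 * \sum_(a < m) (derive1n 2 theta) (coord x a t) * (vel x a t) ^+ 2.

End Defs.
Arguments simplex {R} m.
Arguments simplex_int {R} m.

From Pilot Require Import Defs.
From HB Require Import structures.
From mathcomp Require Import all_boot all_order all_algebra.
From mathcomp Require Import all_classical all_reals all_analysis.
From mathcomp Require Import ring lra.
Set Implicit Arguments.
Unset Strict Implicit.
Unset Printing Implicit Defensive.

Import Order.TTheory GRing.Theory Num.Theory.
Import numFieldNormedType.Exports.
Local Open Scope classical_set_scope.
Local Open Scope ring_scope.

(* Along (ID) the constraint forces sum_a xdot_a = 0, and then all the
   Lagrange-multiplier terms drop out of the energy balance:
   dK/dt = sum_a xdot_a v_a - eta sum_a theta''_a xdot_a^2.
   Each summand xdot_a v_a - eta theta''_a xdot_a^2 is a concave quadratic in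
   xdot_a, hence at most v_a^2 / (4 eta theta''_a).  The gradient of the
   Lipschitz potential is bounded, and theta'' is decreasing (theta''' < 0),
   so on the simplex, where x_a <= 1, theta''(x_a) >= theta''(1) > 0. *)

Section Calculus.
Context {R : realType}.

Lemma is_derive1_weighted_sqr (g f : R -> R) (t : R) :
  derivable g (f t) 1 -> derivable f t 1 -> derivable (derive1 f) t 1 ->
  is_derive t 1 (fun s => g (f s) * derive1 f s ^+ 2)
    (derive1 g (f t) * derive1 f t ^+ 3 + 2 * g (f t) * derive1 f t * derive1n 2 f t).
Proof.
move=> dg df ddf.
have Dgf : is_derive t 1 (g \o f) (derive1 g (f t) * derive1 f t).
  by apply: is_derive1_comp; rewrite derive1E; exact: derivableP.
have Df2 : is_derive t 1 (derive1 f ^+ 2) ((2%:R * derive1 f t ^+ 1) *: derive1n 2 f t).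
  by apply: is_deriveX; rewrite derive1nS derive1n1 derive1E; exact: derivableP.
have -> : (fun s => g (f s) * derive1 f s ^+ 2) = (g \o f) * derive1 f ^+ 2.
  by apply/funext => s; rewrite /= exprfctE.
apply: is_derive_eq; rewrite /= !exprfctE /GRing.scale /=; ring.
Qed.

Lemma sum_derive1_eq0_of_sum_cst (m : nat) (f : 'I_m -> R -> R) (c t : R) :
  (\forall s \near t, \sum_(a < m) f a s = c) ->
  (forall a, derivable (f a) t 1) -> \sum_(a < m) derive1 (f a) t = 0.
Proof.
move=> sum_cst df.
have Dsum : is_derive t 1 (\sum_(a < m) f a) (\sum_(a < m) derive1 (f a) t).
  by apply: is_derive_sum => a; rewrite derive1E; exact: derivableP.
have eq_cst : \forall s \near t, (\sum_(a < m) f a) s = cst c s.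
  by apply: filterS sum_cst => s <-; rewrite fct_sumE.
have Dcst := near_eq_is_derive eq_cst Dsum.
by rewrite -(@derive_val _ _ _ _ _ _ _ Dcst) derive_cst.
Qed.

Lemma kernel_derive2_nincr (theta : R -> R) (y z : R) :
  is_kernel theta -> 0 < y -> y <= z ->
  derive1n 2 theta z <= derive1n 2 theta y.
Proof.
move=> [smooth [_ [_ d3_lt0]]] y0 yz.
have d2_derivable w : y <= w -> derivable (derive1n 2 theta) w 1.
  by move=> yw; apply: smooth; exact: lt_le_trans yw.
apply: (@ler0_derive1_le_cc _ _ y z); rewrite ?in_itv /= ?lexx ?yz //.
- by move=> w; rewrite in_itv /= => /andP[/ltW yw _]; exact: d2_derivable.
- move=> w; rewrite in_itv /= => /andP[yw _].
  by apply/ltW/d3_lt0; exact: lt_trans yw.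
- apply: continuous_in_subspaceT => w; rewrite inE /= in_itv /= => /andP[yw _].
  by apply/differentiable_continuous/derivable1_diffP; exact: d2_derivable.
Qed.

Lemma norm_derive_le_lipschitz (V : normedModType R) (U : set V) (F : V -> R)
    (k : R) (p v : V) :
  open U -> U p -> (forall q r, U q -> U r -> `|F q - F r| <= k * `|q - r|) ->
  derivable F p v -> `|'D_v F p| <= k * `|v|.
Proof.
move=> oU Up lipF dF.
have line_cont : {for 0, continuous (fun h : R => h *: v + p)}.
  by apply: continuousD; [exact: scalel_continuous | exact: cst_continuous].
have near_U : \forall h \near 0^', U (h *: v + p).
  have := (continuous_withinNx _ _).1 line_cont; rewrite /= scale0r add0r.
  by apply; exact: open_nbhs_nbhs.
apply: (cvgr_to_le (cvg_norm dF)); near=> h.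
have h_neq0 : h != 0 by near: h; exact: nbhs_dnbhs_neq.
have Uh : U (h *: v + p) by near: h; exact: near_U.
rewrite /= normrZ normrV ?unitfE ?normr_eq0 // ler_pdivrMl ?normr_gt0 //.
have := lipF _ _ Uh Up; rewrite addrK normrZ.
by rewrite mulrCA.
Unshelve. all: by end_near.
Qed.

End Calculus.

Lemma energy_balance (R : numFieldType) (m : nat) (c b v w dd : 'I_m -> R)
    (S1 S2 eta : R) :
  (forall a, c a != 0) -> \sum_a w a = 0 ->
  (forall a, dd a = (c a)^-1 * (v a - S1) - (2 * c a)^-1 * (b a * w a ^+ 2 - S2)
                    - eta * w a) ->
  2^-1 * \sum_a (b a * w a ^+ 3 + 2 * c a * w a * dd a)
  = \sum_a (w a * v a - eta * c a * w a ^+ 2).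
Proof.
move=> c_neq0 sum_w dd_def.
have split_term a : b a * w a ^+ 3 + 2 * c a * w a * dd a =
    2 * (w a * v a - eta * c a * w a ^+ 2) + (S2 - 2 * S1) * w a.
  by rewrite dd_def; field; rewrite c_neq0.
under eq_bigr do rewrite split_term.
by rewrite big_split /= -!mulr_sumr sum_w mulr0 addr0 mulrA mulVf ?mul1r.
Qed.

Lemma concave_quadratic_le (R : realFieldType) (w v c eta c0 V : R) :
  0 < eta -> 0 < c0 -> c0 <= c -> `|v| <= V ->
  w * v - eta * c * w ^+ 2 <= V ^+ 2 / (4 * eta * c0).
Proof.
move=> eta_gt0 c0_gt0 c0c vV.
have c_gt0 : 0 < c := lt_le_trans c0_gt0 c0c.
have le_vertex : w * v - eta * c * w ^+ 2 <= v ^+ 2 / (4 * (eta * c)).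
  rewrite ler_pdivlMr ?mulr_gt0 //.
  have := sqr_ge0 (v - 2 * (eta * c) * w); nra.
apply: (le_trans le_vertex); rewrite mulrA; apply: ler_pM.
- exact: sqr_ge0.
- by rewrite invr_ge0 ltW // !mulr_gt0.
- by rewrite -[v ^+ 2]real_normK ?num_real // ler_sqr ?nnegrE ?(le_trans (normr_ge0 v)).
- by rewrite lef_pV2 ?posrE ?mulr_gt0 // ler_pM2l ?mulr_gt0.
Qed.

Section InertialDynamics.
Context {R : realType} {m : nat} {theta : R -> R} {Phi : 'rV[R]_m -> R}.
Context {eta : R} {x : R -> 'rV[R]_m}.
Hypothesis theta_kernel : is_kernel theta.
Hypothesis x_solution : ID_interior_solution theta Phi eta x.

Let th2 (t : R) (a : 'I_m) := derive1n 2 theta (Defs.coord x a t).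

Lemma is_derive_kinetic (t : R) : 0 <= t ->
  is_derive t 1 (kinetic theta x)
    (2^-1 * \sum_a (derive1n 3 theta (Defs.coord x a t) * vel x a t ^+ 3
                    + 2 * th2 t a * vel x a t * acc x a t)).
Proof.
move=> t_ge0; have [[x_pos _] [x_derivable _]] := x_solution t_ge0.
have -> : kinetic theta x =
    2^-1 *: \sum_a (fun s => derive1n 2 theta (Defs.coord x a s) * vel x a s ^+ 2).
  by apply/funext => s; rewrite /kinetic fct_sumE.
apply: is_deriveZ; apply: is_derive_sum => a.
have [dx dv] := x_derivable a.
have d2_derivable : derivable (derive1n 2 theta) (Defs.coord x a t) 1.
  by apply: theta_kernel.1; exact: x_pos.
exact: (is_derive1_weighted_sqr d2_derivable dx dv).
Qed.

Lemma sum_vel_eq0 (t : R) : 0 < t -> \sum_a vel x a t = 0.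
Proof.
move=> t_gt0; apply: (@sum_derive1_eq0_of_sum_cst _ _ _ 1).
- near=> s.
  have s_gt0 : 0 < s by near: s; exact: lt_nbhsr.
  by have [[_ sum1] _] := x_solution (ltW s_gt0).
- by move=> a; have [_ [/(_ a)[] ]] := x_solution (ltW t_gt0).
Unshelve. all: by end_near.
Qed.

Lemma derive_kinetic (t : R) : 0 < t ->
  derive1 (kinetic theta x) t
  = \sum_a (vel x a t * pgrad Phi (x t) a - eta * th2 t a * vel x a t ^+ 2).
Proof.
move=> t_gt0; have [[x_pos _] [_ x_ID]] := x_solution (ltW t_gt0).
pose Th2 := (\sum_b (th2 t b)^-1)^-1.
rewrite derive1E (@derive_val _ _ _ _ _ _ _ (is_derive_kinetic (ltW t_gt0))).
apply: (@energy_balance _ _ (th2 t) (fun a => derive1n 3 theta (Defs.coord x a t))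
  (pgrad Phi (x t)) (fun a => vel x a t) (fun a => acc x a t)
  (\sum_b Th2 / th2 t b * pgrad Phi (x t) b)
  (\sum_b Th2 / th2 t b * derive1n 3 theta (Defs.coord x b t) * vel x b t ^+ 2)
  eta _ (sum_vel_eq0 t_gt0) x_ID).
by move=> a; rewrite gt_eqF //; apply: theta_kernel.2.2.1; exact: x_pos.
Qed.

End InertialDynamics.

Theorem lemma3p3 (R : realType) (n : nat) (theta : R -> R)
  (Phi : 'rV[R]_(n.+1) -> R) (eta : R) (x : R -> 'rV[R]_(n.+1)) :
  (1 <= n)%N ->
  is_kernel theta ->
  (exists U : set 'rV[R]_(n.+1),
      open U /\ simplex n.+1 `<=` U /\ smooth_on U Phi /\
      [lipschitz Phi p | p in U]) ->
  0 < eta ->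
  ID_interior_solution theta Phi eta x ->
  exists M : R, forall t : R, 0 <= t ->
    derivable (kinetic theta x) t 1 /\ derive1 (kinetic theta x) t <= M.
Proof.
move=> _ kernel [U [oU [simplexU [smoothU lipU]]]] eta_gt0 sol.
have [k lipk] : exists k : R,
    forall q r, U q -> U r -> `|Phi q - Phi r| <= k * `|q - r|.
  case: lipU => M [_ lipM]; exists (M + 1) => q r Uq Ur.
  by apply: (lipM (M + 1) _ (q, r)); rewrite ?ltrDl.
pose c0 := derive1n 2 theta 1.
have c0_gt0 : 0 < c0 := kernel.2.2.1 _ ltr01.
exists (Num.max (\sum_(a < n.+1) (k * `|evec R a|) ^+ 2 / (4 * eta * c0))
                (derive1 (kinetic theta x) 0)) => t t_ge0.
have DK := is_derive_kinetic kernel sol t_ge0.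
split; first exact: (@ex_derive _ _ _ _ _ _ _ DK).
(* The simplex constraint holds only for t >= 0, so at t = 0 it does not force
   sum_a xdot_a = 0; that single value is absorbed by the max. *)
have [->|t_neq0] := eqVneq t 0; first by rewrite le_max lexx orbT.
have t_gt0 : 0 < t by rewrite lt_neqAle eq_sym t_neq0.
have [[x_pos x_sum] _] := sol _ t_ge0.
have U_xt : U (x t) by apply: simplexU; split => [a|]; [exact/ltW/x_pos | exact: x_sum].
have x_le1 a : x t ord0 a <= 1.
  by rewrite -x_sum (bigD1 a) //= lerDl sumr_ge0 // => b _; exact/ltW/x_pos.
rewrite le_max (derive_kinetic kernel sol t_gt0); apply/orP; left.
apply: ler_sum => a _.
apply: concave_quadratic_le eta_gt0 c0_gt0 _ _.
  exact: kernel_derive2_nincr kernel (x_pos a) (x_le1 a).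
exact: norm_derive_le_lipschitz oU U_xt lipk ((smoothU [::] _ U_xt).2 a).
Qed.
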